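(* There exists a deterministic distributed algorithm with advice (an oracle together with an algorithm) that solves Selection in every anonymous port-labeled graph $G$ whose Selection index $\psi_S(G)$ is finite, using exactly $\psi_S(G)$ communication rounds and advice of size $O((\Delta-1)^{\psi_S(G)}\log \Delta)$, where $\Delta$ is the maximum degree of $G$.
   Context: Networks are simple undirected connected graphs without node identifiers; at each node of degree $d$ incident edges have distinct local port numbers $0,\dots,d-1$. Communication is in the synchronous LOCAL model (all nodes start together; each round every node exchanges arbitrary messages with all neighbors); initially a node knows only its degree. In the advice model, an oracle knowing the whole port-labeled graph $G$ gives the same binary string to all nodes at the start; its length is the size of advice. Selection: exactly one node outputs ''leader'' and all others output ''non-leader''. The Selection index $\psi_S(G)$ is the minimum number of rounds in which Selection can be solved on $G$ by a deterministic algorithm when every node knows the complete map of $G$ (an isomorphic copy with all port numbers); it is finite iff the views of all nodes are distinct, where the view of $v$ is the infinite tree of all finite paths from $v$ coded by their port-number sequences. *)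

From mathcomp Require Import all_boot.
Set Implicit Arguments. Unset Strict Implicit. Unset Printing Implicit Defensive.

(* Nodes are 0 .. gn-1 (the numbering is only for the oracle / for stating  *)
(* things; nodes never see it).  Node v has degree gdeg v; its port p        *)
(* (p < gdeg v) leads to neighbour gnbr v p, and the edge arrives there at   *)
(* port gback v p.                                                           *)
Record PGraph := mkPGraph {
  gn    : nat;
  gdeg  : nat -> nat;
  gnbr  : nat -> nat -> nat;
  gback : nat -> nat -> nat }.

Fixpoint walk (G : PGraph) (v : nat) (ps : seq nat) : option nat :=
  match ps with
  | [::] => Some v
  | p :: ps' => if p < gdeg G v then walk G (gnbr G v p) ps' else None
  end.

Definition valid_graph (G : PGraph) : Prop :=
  0 < gn G /\
  (forall v p, v < gn G -> p < gdeg G v ->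
     [/\ gnbr G v p < gn G,
         gback G v p < gdeg G (gnbr G v p),
         gnbr G (gnbr G v p) (gback G v p) = v,
         gback G (gnbr G v p) (gback G v p) = p &
         (gnbr G v p <> v /\
          forall q, q < gdeg G v -> gnbr G v q = gnbr G v p -> q = p)]) /\
  (forall u w, u < gn G -> w < gn G -> exists ps, walk G u ps = Some w).

Definition maxdeg (G : PGraph) : nat := \max_(v < gn G) gdeg G v.

(* A node starts knowing only the advice string and its degree.  In each    *)
(* round every node sends on each port p a message (computed from its state *)
(* and p), then updates its state from the messages received, indexed by    *)
(* the local port of arrival (None for non-existing ports).  A node outputs *)
(* the first time [decide] returns Some b (true = leader, false = non-      *)
(* leader); this first output is final.                                     *)
Record Algo := mkAlgo {
  st     : Type;
  msg    : Type;
  init   : seq bool -> nat -> st;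
  send   : st -> nat -> msg;
  step   : st -> (nat -> option msg) -> st;
  decide : st -> option bool }.

Fixpoint states (A : Algo) (G : PGraph) (adv : seq bool) (t : nat) : nat -> st A :=
  match t with
  | 0 => fun v => @init A adv (gdeg G v)
  | t'.+1 =>
      let s := states A G adv t' in
      fun v => @step A (s v)
        (fun p => if p < gdeg G v then Some (@send A (s (gnbr G v p)) (gback G v p))
                  else None)
  end.

Fixpoint first_some (f : nat -> option bool) (k : nat) : option bool :=
  match k with
  | 0 => f 0
  | k'.+1 => match first_some f k' with
             | Some b => Some b
             | None => f k'.+1
             end
  end.

Definition out_by (A : Algo) (G : PGraph) (adv : seq bool) (T v : nat) : option bool :=
  first_some (fun t => @decide A (states A G adv t v)) T.

Definition solves_selection (A : Algo) (G : PGraph) (adv : seq bool) (T : nat) : Prop :=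
  [/\ forall v, v < gn G -> out_by A G adv T v <> None,
      (forall T', T' < T -> exists v, v < gn G /\ out_by A G adv T' v = None) &
      exists l, [/\ l < gn G, out_by A G adv T l = Some true &
                    (forall v, v < gn G -> v <> l -> out_by A G adv T v = Some false)]].

(* Selection index: psi_S(G) = k means k is the minimum number of rounds in
   which Selection can be solved on G by a deterministic algorithm when every
   node knows the complete map of G.  Knowledge of the map is modelled by
   letting the algorithm depend arbitrarily on G (no advice needed). *)
Definition selection_index (G : PGraph) (k : nat) : Prop :=
  (exists A : Algo, solves_selection A G [::] k) /\
  (forall (A : Algo) (T : nat), solves_selection A G [::] T -> k <= T).

From mathcomp Require Import all_boot zify.
From Stdlib Require Import FunctionalExtensionality ClassicalEpsilon.
Set Implicit Arguments. Unset Strict Implicit. Unset Printing Implicit Defensive.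

(* The oracle fixes k = psi_S(G) and a node l that some k-round algorithm
   knowing the map elects, and writes down k, the maximum degree D and, for
   every t <= k, a fixed-width binary code of the depth-t view of l.  In round t
   every node can compute the code of its own depth-t view: each neighbour sends
   the code of its depth-(t-1) view without the branch leading back through the
   shared edge, so a depth-t code has D (D-1)^(t-1) branches and all k+1 codes
   take O((D-1)^k log D) bits.  A node answers non-leader as soon as its code
   differs from the advised one, and leader if it still agrees in round k.
   No node u <> l agrees with l up to depth k: views that agree up to depth k
   force any algorithm through the same states for k rounds, so the optimal
   algorithm would elect u as well. *)

Fixpoint nat2bits (w n : nat) : seq bool :=
  if w is w'.+1 then odd n :: nat2bits w' n./2 else [::].

Fixpoint bits2nat (s : seq bool) : nat :=
  if s is b :: s' then b + (bits2nat s').*2 else 0.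

Lemma size_nat2bits w n : size (nat2bits w n) = w.
Proof. by elim: w n => //= w IHw n; rewrite IHw. Qed.

Lemma nat2bitsK w n : n < 2 ^ w -> bits2nat (nat2bits w n) = n.
Proof.
elim: w n => [|w IHw] n /=; first by rewrite expn0; case: n.
by move=> lt_n; rewrite IHw ?odd_double_half // ltn_half_double -mul2n -expnS.
Qed.

Lemma nat2bits_inj w m n :
  m < 2 ^ w -> n < 2 ^ w -> nat2bits w m = nat2bits w n -> m = n.
Proof. by move=> lt_m lt_n eq_mn; rewrite -(nat2bitsK lt_m) -(nat2bitsK lt_n) eq_mn. Qed.

Lemma cat_inj_size (T : eqType) (s1 s2 t1 t2 : seq T) :
  size s1 = size t1 -> s1 ++ s2 = t1 ++ t2 -> s1 = t1 /\ s2 = t2.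
Proof. by move=> eq_sz /eqP; rewrite eqseq_cat // => /andP[/eqP-> /eqP->]. Qed.

Section FlattenConstSize.
Variables (I : eqType) (T : Type) (L : nat) (ps : seq I).

Lemma shape_map_const (f : I -> seq T) :
  {in ps, forall p, size (f p) = L} -> shape (map f ps) = nseq (size ps) L.
Proof.
move=> sz_f; rewrite /shape -map_comp.
have -> : map (size \o f) ps = map (fun=> L) ps by apply/eq_in_map => p /sz_f.
by elim: ps {sz_f} => //= p s ->.
Qed.

Lemma size_flatten_map_const (f : I -> seq T) :
  {in ps, forall p, size (f p) = L} -> size (flatten (map f ps)) = L * size ps.
Proof. by move=> sz_f; rewrite size_flatten shape_map_const // sumn_nseq. Qed.

Lemma flatten_map_const_inj (f g : I -> seq T) :
  {in ps, forall p, size (f p) = L} -> {in ps, forall p, size (g p) = L} ->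
  flatten (map f ps) = flatten (map g ps) -> {in ps, f =1 g}.
Proof.
move=> sz_f sz_g eq_fg; apply/eq_in_map/eq_from_flatten_shape => //.
by rewrite !shape_map_const.
Qed.

End FlattenConstSize.

Lemma size_filter_neq_iota q D :
  size [seq p <- iota 0 D | p != q] = D - (q < D).
Proof.
have := count_predC (pred1 q) (iota 0 D).
rewrite size_filter size_iota count_uniq_mem ?iota_uniq // mem_iota add0n.
by move=> eqD; rewrite -[X in X - _]eqD addKn.
Qed.

Fixpoint code_size (w D t : nat) : nat :=
  if t is t'.+1 then w + D.-1 * (1 + w + code_size w D t') else w.

Definition root_code_size (w D t : nat) : nat :=
  if t is t'.+1 then w + D * (1 + w + code_size w D t') else w.

Definition port_slot (w D deg t : nat) (inbox : nat -> option (nat * seq bool))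
    (p : nat) : seq bool :=
  if p < deg then
    if inbox p is Some (b, c) then true :: nat2bits w b ++ c else [::]
  else nseq (1 + w + code_size w D t) false.

(* Ports [p < D] other than [q] each get a slot of the same length, so that a
   code can be cut back into its parts; [q >= D] excludes no port. *)
Definition local_code (w D deg t : nat) (inbox : nat -> option (nat * seq bool))
    (q : nat) : seq bool :=
  if t is t'.+1 then
    nat2bits w deg ++ flatten [seq port_slot w D deg t' inbox p | p <- iota 0 D & p != q]
  else nat2bits w deg.

Fixpoint inbox (G : PGraph) (w D t v : nat) {struct t} : nat -> option (nat * seq bool) :=
  if t is t'.+1 then fun p =>
    if p < gdeg G v then
      Some (gback G v p,
            local_code w D (gdeg G (gnbr G v p)) t' (inbox G w D t' (gnbr G v p)) (gback G v p))
    else None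
  else fun=> None.

Definition view_code (G : PGraph) (w D t v q : nat) : seq bool :=
  local_code w D (gdeg G v) t (inbox G w D t v) q.

Section ViewCodes.
Variables (G : PGraph) (w D : nat).
Hypothesis G_valid : valid_graph G.
Hypothesis deg_le : forall v, v < gn G -> gdeg G v <= D.
Hypothesis D_lt : D < 2 ^ w.

Lemma valid_port v p : v < gn G -> p < gdeg G v ->
  [/\ gnbr G v p < gn G, gback G v p < gdeg G (gnbr G v p),
      gnbr G (gnbr G v p) (gback G v p) = v & gback G (gnbr G v p) (gback G v p) = p].
Proof. by case: G_valid => _ [port_ok _] v_lt p_lt; case: (port_ok v p v_lt p_lt). Qed.

Lemma gback_lt v p : v < gn G -> p < gdeg G v -> gback G v p < D.
Proof.
move=> v_lt p_lt; have [nbr_lt back_lt _ _] := valid_port v_lt p_lt.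
exact: leq_trans back_lt (deg_le nbr_lt).
Qed.

Lemma port_slot_inbox t v p : p < gdeg G v ->
  port_slot w D (gdeg G v) t (inbox G w D t.+1 v) p =
  true :: nat2bits w (gback G v p) ++ view_code G w D t (gnbr G v p) (gback G v p).
Proof. by move=> p_lt; rewrite /port_slot /= p_lt. Qed.

Lemma size_view_codeS t v q : v < gn G ->
  (forall u q', u < gn G -> q' < D -> size (view_code G w D t u q') = code_size w D t) ->
  size (view_code G w D t.+1 v q) = w + (D - (q < D)) * (1 + w + code_size w D t).
Proof.
move=> v_lt sz_t; rewrite /view_code /local_code size_cat size_nat2bits.
rewrite (@size_flatten_map_const _ _ (1 + w + code_size w D t)) ?size_filter_neq_iota 1?mulnC //.
move=> p _; case: (ltnP p (gdeg G v)) => p_lt; last first.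
  by rewrite /port_slot ltnNge p_lt size_nseq.
have [nbr_lt _ _ _] := valid_port v_lt p_lt.
by rewrite port_slot_inbox //= size_cat size_nat2bits sz_t ?gback_lt.
Qed.

Lemma size_view_code t v q : v < gn G -> q < D -> size (view_code G w D t v q) = code_size w D t.
Proof.
elim: t v q => [|t IHt] v q v_lt q_lt; first by rewrite /view_code /= size_nat2bits.
by rewrite size_view_codeS // q_lt subn1.
Qed.

Lemma size_view_code_root t v : v < gn G -> size (view_code G w D t v D) = root_code_size w D t.
Proof.
case: t => [|t] v_lt; first by rewrite /view_code /= size_nat2bits.
by rewrite size_view_codeS ?ltnn ?subn0 //; exact: size_view_code.
Qed.

Lemma view_code_deg t u x q : u < gn G -> x < gn G ->
  view_code G w D t u q = view_code G w D t x q -> gdeg G u = gdeg G x.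
Proof.
move=> u_lt x_lt; have deg_lt y : y < gn G -> gdeg G y < 2 ^ w.
  by move=> y_lt; exact: leq_ltn_trans (deg_le y_lt) D_lt.
rewrite /view_code /local_code; case: t => [|t] eq_code.
  by apply: nat2bits_inj eq_code; exact: deg_lt.
have [|eq_bits _] := cat_inj_size _ eq_code; first by rewrite !size_nat2bits.
by apply: nat2bits_inj eq_bits; exact: deg_lt.
Qed.

Lemma view_code_port t u x q p : u < gn G -> x < gn G ->
  view_code G w D t.+1 u q = view_code G w D t.+1 x q -> p < gdeg G u -> p != q ->
  gback G u p = gback G x p /\
  view_code G w D t (gnbr G u p) (gback G u p) = view_code G w D t (gnbr G x p) (gback G x p).
Proof.
move=> u_lt x_lt eq_code p_lt p_neq.
have eq_deg := view_code_deg u_lt x_lt eq_code.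
have p_ltx : p < gdeg G x by rewrite -eq_deg.
have sz_slot y : y < gn G -> {in [seq p <- iota 0 D | p != q], forall p,
    size (port_slot w D (gdeg G y) t (inbox G w D t.+1 y) p) = 1 + w + code_size w D t}.
  move=> y_lt p' _; case: (ltnP p' (gdeg G y)) => p'_lt; last first.
    by rewrite /port_slot ltnNge p'_lt size_nseq.
  have [nbr_lt _ _ _] := valid_port y_lt p'_lt.
  by rewrite port_slot_inbox //= size_cat size_nat2bits size_view_code ?gback_lt.
have [|_ eq_flat] := cat_inj_size _ eq_code; first by rewrite !size_nat2bits.
have p_in : p \in [seq p <- iota 0 D | p != q].
  by rewrite mem_filter p_neq mem_iota /= (leq_trans p_lt (deg_le u_lt)).
have := flatten_map_const_inj (sz_slot _ u_lt) (sz_slot _ x_lt) eq_flat p_in.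
rewrite !port_slot_inbox // => -[] /cat_inj_size[]; first by rewrite !size_nat2bits.
move=> eq_bits ->; split=> //.
by apply: nat2bits_inj eq_bits; exact: ltn_trans (gback_lt _ _) D_lt.
Qed.

Section StatesFromViews.
Variables (A : Algo) (adv : seq bool).
Local Notation state := (states A G adv).

(* Port [q] is set apart so that the induction can descend to the neighbours
   behind any other port [p]: their views agree except along the edge back to
   [u] and [x], whose states are known for the earlier rounds. *)
Lemma states_eq_of_view_code_eq t u x q : u < gn G -> x < gn G ->
  (forall s, s <= t -> view_code G w D s u q = view_code G w D s x q) ->
  (q < gdeg G u -> gback G u q = gback G x q /\
     forall s, s < t -> state s (gnbr G u q) = state s (gnbr G x q)) ->
  forall s, s <= t -> state s u = state s x.
Proof.
elim: t u x q => [|t IHt] u x q u_lt x_lt eq_code eq_behind_q.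
  move=> s; rewrite leqn0 => /eqP-> /=.
  by rewrite (view_code_deg u_lt x_lt (eq_code 0 (leqnn 0))).
have eq_upto_t : forall s, s <= t -> state s u = state s x.
  apply: (IHt u x q) => // [s s_le|q_lt]; first exact/eq_code/leqW.
  by have [eq_back eq_st] := eq_behind_q q_lt; split=> // s s_lt; exact/eq_st/ltnW.
move=> s; rewrite leq_eqVlt ltnS => /orP[/eqP{s}-> | ]; last exact: eq_upto_t.
have eq_codeS := eq_code t.+1 (leqnn _).
have eq_deg := view_code_deg u_lt x_lt eq_codeS.
rewrite /= eq_upto_t // eq_deg; congr (step _ _); apply: functional_extensionality => p.
case: ifP => p_lt //; have p_ltu : p < gdeg G u by rewrite eq_deg.
have [eq_pq|p_neq] := eqVneq p q.
  by subst q; have [-> eq_st] := eq_behind_q p_ltu; rewrite eq_st.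
have [eq_back _] := view_code_port u_lt x_lt eq_codeS p_ltu p_neq.
have [nbru_lt _ nbru_back backu_back] := valid_port u_lt p_ltu.
have [nbrx_lt _ nbrx_back backx_back] := valid_port x_lt p_lt.
rewrite eq_back; congr (Some (send _ _)).
apply: (IHt _ _ (gback G x p)) => // [s s_le|_].
  by rewrite -{1}eq_back; case: (view_code_port u_lt x_lt (eq_code s.+1 s_le) p_ltu p_neq).
rewrite -{1 3}eq_back backu_back backx_back nbru_back nbrx_back.
by split=> // s s_lt; exact/eq_upto_t/ltnW.
Qed.

End StatesFromViews.
End ViewCodes.

Definition unary_head (s : seq bool) : nat := index false s.
Definition unary_tail (s : seq bool) : seq bool := drop (index false s).+1 s.

Lemma unary_headK n s : unary_head (nseq n true ++ false :: s) = n.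
Proof. by elim: n => //= n ->. Qed.

Lemma unary_tailK n s : unary_tail (nseq n true ++ false :: s) = s.
Proof. by rewrite /unary_tail -/(unary_head _) unary_headK; elim: n => /= [|n]; rewrite ?drop0. Qed.

Definition make_advice (k w D : nat) (codes : seq bool) : seq bool :=
  nseq k true ++ false :: nseq w true ++ false :: nat2bits w D ++ codes.

Definition adv_rounds (adv : seq bool) : nat := unary_head adv.
Definition adv_width (adv : seq bool) : nat := unary_head (unary_tail adv).
Definition adv_maxdeg (adv : seq bool) : nat :=
  bits2nat (take (adv_width adv) (unary_tail (unary_tail adv))).
Definition adv_codes (adv : seq bool) : seq bool :=
  drop (adv_width adv) (unary_tail (unary_tail adv)).
Definition adv_views (adv : seq bool) : seq (seq bool) :=
  let sizes := [seq root_code_size (adv_width adv) (adv_maxdeg adv) t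
                | t <- iota 0 (adv_rounds adv).+1] in
  reshape sizes (adv_codes adv).

Lemma make_adviceK k w D codes : D < 2 ^ w ->
  [/\ adv_rounds (make_advice k w D codes) = k, adv_width (make_advice k w D codes) = w,
      adv_maxdeg (make_advice k w D codes) = D & adv_codes (make_advice k w D codes) = codes].
Proof.
move=> D_lt; have width_eq : adv_width (make_advice k w D codes) = w.
  by rewrite /adv_width /make_advice unary_tailK unary_headK.
rewrite /adv_maxdeg /adv_codes width_eq /adv_rounds /make_advice !unary_tailK unary_headK.
by rewrite take_size_cat ?drop_size_cat ?size_nat2bits ?nat2bitsK.
Qed.

Lemma size_make_advice k w D codes :
  size (make_advice k w D codes) = k.+1 + w.+1 + w + size codes.
Proof.
by rewrite /make_advice size_cat size_nseq /= size_cat size_nseq /= size_cat size_nat2bits; lia.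
Qed.

Definition leader_codes (G : PGraph) (w D k l : nat) : seq bool :=
  flatten [seq view_code G w D t l D | t <- iota 0 k.+1].

Lemma adv_views_leader G w D k l :
  valid_graph G -> (forall v, v < gn G -> gdeg G v <= D) -> D < 2 ^ w -> l < gn G ->
  adv_views (make_advice k w D (leader_codes G w D k l)) =
    [seq view_code G w D t l D | t <- iota 0 k.+1].
Proof.
move=> G_valid deg_le D_lt l_lt; rewrite /adv_views.
have [-> -> -> ->] := make_adviceK k (leader_codes G w D k l) D_lt.
have -> : [seq root_code_size w D t | t <- iota 0 k.+1] =
          shape [seq view_code G w D t l D | t <- iota 0 k.+1].
  by rewrite /shape -map_comp; apply/eq_map => t /=; rewrite size_view_code_root.
exact: flattenK.
Qed.

Record vstate := VState {
  vs_adv : seq bool; vs_deg : nat; vs_round : nat; vs_inbox : nat -> option (nat * seq bool) }.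

Definition vs_code (s : vstate) (q : nat) : seq bool :=
  local_code (adv_width (vs_adv s)) (adv_maxdeg (vs_adv s))
    (vs_deg s) (vs_round s) (vs_inbox s) q.

(* A message carries the port it leaves by, as the receiver's view records it. *)
Definition view_check : Algo := @mkAlgo vstate (nat * seq bool)
  (fun adv d => VState adv d 0 (fun=> None))
  (fun s q => (q, vs_code s q))
  (fun s m => VState (vs_adv s) (vs_deg s) (vs_round s).+1 m)
  (fun s => let adv := vs_adv s in
     if vs_code s (adv_maxdeg adv) != nth [::] (adv_views adv) (vs_round s) then Some false
     else if vs_round s < adv_rounds adv then None else Some true).

Lemma states_view_check G adv t v :
  states view_check G adv t v =
  VState adv (gdeg G v) t (inbox G (adv_width adv) (adv_maxdeg adv) t v).
Proof.
elim: t v => [|t IHt] v //=; rewrite IHt; congr VState.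
by apply: functional_extensionality => p; rewrite IHt.
Qed.

Lemma first_some_ext f g T :
  (forall t, t <= T -> f t = g t) -> first_some f T = first_some g T.
Proof.
elim: T => [|T IHT] eq_fg /=; first exact: eq_fg.
by rewrite IHT ?eq_fg // => t t_le; exact/eq_fg/leqW.
Qed.

Lemma first_some_None f T : (forall t, t <= T -> f t = None) -> first_some f T = None.
Proof.
elim: T => [|T IHT] f_None /=; first exact: f_None.
by rewrite IHT ?f_None // => t t_le; exact/f_None/leqW.
Qed.

Lemma first_some_first f T t0 b : t0 <= T -> (forall t, t < t0 -> f t = None) ->
  f t0 = Some b -> first_some f T = Some b.
Proof.
elim: T => [|T IHT] t0_le f_None f_t0 /=; first by move: t0_le; rewrite leqn0 => /eqP <-.
move: t0_le; rewrite leq_eqVlt ltnS => /orP[/eqP eq_t0|]; last by move/IHT->.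
by rewrite first_some_None -?eq_t0 // => t t_le; apply: f_None; rewrite eq_t0 ltnS.
Qed.

Section ViewCheckRun.
Variables (G : PGraph) (w D k l : nat).
Hypothesis G_valid : valid_graph G.
Hypothesis deg_le : forall v, v < gn G -> gdeg G v <= D.
Hypothesis D_lt : D < 2 ^ w.
Hypothesis l_lt : l < gn G.
Hypothesis views_differ : forall u, u < gn G -> u != l ->
  exists t, (t <= k) && (view_code G w D t u D != view_code G w D t l D).
Local Notation adv := (make_advice k w D (leader_codes G w D k l)).
Local Notation out v T := (out_by view_check G adv T v).

Lemma decide_view_check t v : t <= k ->
  decide (states view_check G adv t v) =
  if view_code G w D t v D != view_code G w D t l D then Some false
  else if t < k then None else Some true.
Proof.
move=> t_le; rewrite states_view_check /= /vs_code /= adv_views_leader //.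
have [-> -> -> _] := make_adviceK k (leader_codes G w D k l) D_lt.
by rewrite (nth_map 0) ?size_iota ?nth_iota.
Qed.

Lemma out_leader_early T : T < k -> out l T = None.
Proof.
move=> T_lt; apply: first_some_None => t t_le.
have t_lt := leq_ltn_trans t_le T_lt.
by rewrite decide_view_check ?eqxx ?t_lt // ltnW.
Qed.

Lemma out_leader : out l k = Some true.
Proof.
apply: (@first_some_first _ _ k) => // [t t_lt|]; last by rewrite decide_view_check ?eqxx ?ltnn.
by rewrite decide_view_check ?eqxx ?t_lt // ltnW.
Qed.

Lemma out_other v : v < gn G -> v != l -> out v k = Some false.
Proof.
move=> v_lt v_neq; case: (ex_minnP (views_differ v_lt v_neq)) => t0 /andP[t0_le code_neq] t0_min.
apply: (@first_some_first _ _ t0) => //; last by rewrite decide_view_check // code_neq.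
move=> t t_lt; have t_ltk := leq_trans t_lt t0_le.
rewrite decide_view_check ?(ltnW t_ltk) // t_ltk.
case: eqP => // /eqP code_neq'.
by have := t0_min t; rewrite (ltnW t_ltk) code_neq' leqNgt t_lt => /(_ isT).
Qed.

Lemma view_check_solves : solves_selection view_check G adv k.
Proof.
split=> [v v_lt | T T_lt | ].
- by have [->|v_neq] := eqVneq v l; [rewrite out_leader | rewrite out_other].
- by exists l; split=> //; exact: out_leader_early.
- by exists l; split=> // [|v v_lt /eqP]; [exact: out_leader | exact: out_other].
Qed.

End ViewCheckRun.

Lemma elected_unique A G k l u : solves_selection A G [::] k ->
  out_by A G [::] k l = Some true -> out_by A G [::] k u = Some true ->
  l < gn G -> u < gn G -> u = l.
Proof.
case=> _ _ [l1 [_ _ others_false]] out_l out_u l_lt u_lt.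
have [->|u_neq] := eqVneq u l1; last by rewrite others_false in out_u => //; exact/eqP.
by have [//|l_neq] := eqVneq l l1; rewrite others_false in out_l => //; exact/eqP.
Qed.

Lemma elected_views_differ G w D A k l u :
  valid_graph G -> (forall v, v < gn G -> gdeg G v <= D) -> D < 2 ^ w ->
  solves_selection A G [::] k -> l < gn G -> out_by A G [::] k l = Some true ->
  u < gn G -> u != l ->
  exists t, (t <= k) && (view_code G w D t u D != view_code G w D t l D).
Proof.
move=> G_valid deg_le D_lt solves l_lt out_l u_lt u_neq.
have [/hasP[t]|/hasPn same_views] :=
  boolP (has (fun t => view_code G w D t u D != view_code G w D t l D) (iota 0 k.+1)).
  by rewrite mem_iota => /andP[_ t_lt] code_neq; exists t; rewrite -ltnS t_lt code_neq.
have eq_states : forall s, s <= k -> states A G [::] s u = states A G [::] s l.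
  apply: (states_eq_of_view_code_eq G_valid deg_le D_lt (q := D) u_lt l_lt) => [s s_le|].
    by apply/eqP/negPn/same_views; rewrite mem_iota.
  by rewrite ltnNge deg_le.
have out_u : out_by A G [::] k u = Some true.
  by rewrite -out_l; apply: first_some_ext => t t_le; rewrite eq_states.
by move: u_neq; rewrite (elected_unique solves out_l out_u) ?eqxx.
Qed.

Section CodeSizeBounds.
Variables (w D : nat).
Hypothesis D_ge3 : 3 <= D.

Lemma code_size_bound t : 1 + w + code_size w D t + (2 * w + 1) <= 2 * (2 * w + 1) * D.-1 ^ t.
Proof.
have d_ge2 : 2 <= D.-1 by lia.
elim: t => [|t IHt] /=; first by rewrite expn0; lia.
have := leq_mul (leqnn D.-1) IHt; rewrite expnS; move: (D.-1 ^ t) d_ge2 => X; nia.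
Qed.

Lemma root_code_size_bound t : root_code_size w D t <= 5 * (2 * w + 1) * D.-1 ^ t.
Proof.
case: t => [|t] /=; first by rewrite expn0; lia.
have := code_size_bound t; have pow_gt0 : 0 < D.-1 ^ t by rewrite expn_gt0; lia.
move: pow_gt0; rewrite expnS; set X := D.-1 ^ t; nia.
Qed.

Lemma sum_root_code_size_bound k :
  \sum_(0 <= t < k.+1) root_code_size w D t <= 10 * (2 * w + 1) * D.-1 ^ k.
Proof.
have d_ge2 : 2 <= D.-1 by lia.
elim: k => [|k IHk]; first by rewrite big_nat1 /= expn0; lia.
rewrite big_nat_recr //=; have /= := root_code_size_bound k.+1.
have := leq_mul (leqnn (5 * (2 * w + 1) * D.-1 ^ k)) d_ge2.
move: IHk; rewrite expnS; move: (D.-1 ^ k) => X; nia.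
Qed.

End CodeSizeBounds.

Lemma size_leader_codes G w D k l :
  valid_graph G -> (forall v, v < gn G -> gdeg G v <= D) -> l < gn G ->
  size (leader_codes G w D k l) = \sum_(0 <= t < k.+1) root_code_size w D t.
Proof.
move=> G_valid deg_le l_lt; rewrite size_flatten /shape -map_comp sumnE big_map.
by rewrite /index_iota subn0; apply: eq_bigr => t _; rewrite /= size_view_code_root.
Qed.

Definition bit_width (D : nat) : nat := (trunc_log 2 D).+1.

Lemma make_advice_size_bound k D codes : 3 <= D ->
  size codes <= 10 * (2 * bit_width D + 1) * D.-1 ^ k ->
  size (make_advice k (bit_width D) D codes) <= 100 * (D.-1 ^ k * trunc_log 2 D).
Proof.
move=> D_ge3 size_codes; rewrite size_make_advice /bit_width in size_codes *.
have log_gt0 : 0 < trunc_log 2 D by rewrite trunc_log_gt0; lia.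
have k_lt : k < D.-1 ^ k by apply: ltn_expl; lia.
move: size_codes log_gt0 k_lt; move: (D.-1 ^ k) (trunc_log 2 D) => X L; nia.
Qed.

Definition elects_optimally (G : PGraph) (kl : nat * nat) : Prop :=
  selection_index G kl.1 /\
  exists A, [/\ solves_selection A G [::] kl.1, kl.2 < gn G &
                 out_by A G [::] kl.1 kl.2 = Some true].

Definition optimal_election (G : PGraph) : nat * nat :=
  epsilon (inhabits (0, 0)) (elects_optimally G).

Lemma selection_index_unique G k k' : selection_index G k -> selection_index G k' -> k = k'.
Proof.
move=> [[A solves] k_min] [[A' solves'] k'_min].
by apply/eqP; rewrite eqn_leq (k_min _ _ solves') (k'_min _ _ solves).
Qed.

Lemma optimal_electionP G k : selection_index G k ->
  exists l A, [/\ optimal_election G = (k, l), solves_selection A G [::] k,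
                  l < gn G & out_by A G [::] k l = Some true].
Proof.
move=> k_index; have [[A solves] _] := k_index.
have [_ _ [l [l_lt out_l _]]] := solves.
have elected : exists kl, elects_optimally G kl by exists (k, l); split=> //; exists A.
have := epsilon_spec (inhabits (0, 0)) _ elected; rewrite -/(optimal_election G).
case: (optimal_election G) => k' l' [/= k'_index [A' [solves' l'_lt out_l']]].
by exists l', A'; rewrite (selection_index_unique k'_index k_index) in solves' out_l' *.
Qed.

Definition oracle (G : PGraph) : seq bool :=
  let: (k, l) := optimal_election G in
  let D := maxdeg G in
  make_advice k (bit_width D) D (leader_codes G (bit_width D) D k l).

Lemma leq_maxdeg G v : v < gn G -> gdeg G v <= maxdeg G.
Proof. by move=> v_lt; exact: (@leq_bigmax _ (fun i : 'I_(gn G) => gdeg G i) (Ordinal v_lt)). Qed.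

Theorem mainTheorem3 :
  exists (A : Algo) (oracle : PGraph -> seq bool) (c : nat),
    forall G : PGraph, valid_graph G ->
    forall k : nat, selection_index G k ->
      solves_selection A G (oracle G) k /\
      (3 <= maxdeg G ->
         size (oracle G) <= c * ((maxdeg G).-1 ^ k * trunc_log 2 (maxdeg G))).
Proof.
exists view_check, oracle, 100 => G G_valid k k_index.
have [l [A [opt_eq solves l_lt out_l]]] := optimal_electionP k_index.
have deg_le := @leq_maxdeg G.
have D_lt : maxdeg G < 2 ^ bit_width (maxdeg G) by exact: trunc_log_ltn.
rewrite /oracle opt_eq; split.
  apply: view_check_solves => // u u_lt u_neq.
  exact: elected_views_differ solves l_lt out_l u_lt u_neq.
move=> D_ge3; apply: make_advice_size_bound => //.
by rewrite size_leader_codes //; exact: sum_root_code_size_bound.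
Qed.
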